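(* Fix a variable $x$ and let $\chi$ be any formula generated by $\chi ::= p_x \mid \mathsf{K}_x\alpha \mid \neg\chi \mid (\chi\wedge\chi)$, where $p\in\mathbf{P}$ and $\alpha$ ranges over sentences. Then for every sentence $\beta$, $\mathsf{K}_\chi\beta\to\mathsf{K}_\chi\mathsf{K}_\chi\beta$ is a theorem of $\mathbf{LEL}$.
   Context: Fix a nonempty finite set $\mathbf{A}$ of agents, a countable set $\mathbf{X}$ of variables disjoint from $\mathbf{A}$, and a countable set $\mathbf{P}$ of predicate letters. Formulas and free variables: $\phi ::= p_x \mid \top \mid \neg\phi \mid (\phi\wedge\phi) \mid [x:=a]\phi \mid \mathsf{K}_X\alpha$ ($p\in\mathbf{P}$, $x\in\mathbf{X}$, $a\in\mathbf{A}$, $X\subseteq\mathbf{X}$ finite possibly empty, $\alpha$ with no free variables), $FV(p_x)=\{x\}$, $FV(\top)=\emptyset$, $FV(\neg\phi)=FV(\phi)$, $FV(\phi\wedge\psi)=FV(\phi)\cup FV(\psi)$, $FV([x:=a]\phi)=FV(\phi)\setminus\{x\}$, $FV(\mathsf{K}_X\alpha)=X$. Sentences have no free variables. $\bot:=\neg\top$, $\langle x:=a\rangle\phi:=\neg[x:=a]\neg\phi$. $\phi[y/x]$ replaces free occurrences of $x$ by $y$ (including in index sets of $\mathsf{K}_X$); admissible if $x$ has no free occurrence within the scope of any $[y:=b]$. $[\vec{x}:=\vec{a}]\phi$ abbreviates $[x_1:=a_1]\cdots[x_n:=a_n]\phi$ for equal-length strings $\vec x,\vec a$, $\mathsf{K}_{\vec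 x}:=\mathsf{K}_{\{x_1,\dots,x_n\}}$, $\mathsf{K}_x:=\mathsf{K}_{\{x\}}$, $\{\vec a\}=\{a_1,\dots,a_n\}$. $\mathbf{LEL}$: axioms — propositional tautologies; $\mathsf{K}_X(\alpha\to\beta)\to(\mathsf{K}_X\alpha\to\mathsf{K}_X\beta)$; $\mathsf{K}_X\alpha\to\mathsf{K}_Y\alpha$ ($X\subseteq Y$); $[x:=a](\phi\to\psi)\to([x:=a]\phi\to[x:=a]\psi)$; $\langle x:=a\rangle\phi\to[x:=a]\phi$; $\phi\to[x:=a]\phi$ ($x\notin FV(\phi)$); $[y:=a]([x:=a]\phi\to\phi[y/x])$ ($\phi[y/x]$ admissible); $[x:=a][y:=b]\phi\to[y:=b][x:=a]\phi$ ($x\neq y$); $\bigwedge_{a\in\mathbf{A}}[x:=a]\phi\to\phi$; $\mathsf{K}_X\alpha\to\alpha$; $[\vec{x}:=\vec{a}](\neg\mathsf{K}_{\vec{x}}\alpha\to\mathsf{K}_{\vec{x}}[\vec{x}:=\vec{a}]\neg\mathsf{K}_{\vec{x}}\alpha)$; $[x:=a]\mathsf{K}_{x}\langle x:=a\rangle\top$; $[x:=a](p_x\to\mathsf{K}_{x}[x:=a]p_x)$; $[\vec{x}:=\vec{a}](\bigwedge_{b\in B}[x:=b]\bot\to\mathsf{K}_{\vec{x}}\bigwedge_{b\in B}[x:=b]\bot)$ with $B=\mathbf{A}\setminus\{\vec a\}$. Rules: modus ponens; from sentence $\alpha$ infer $\mathsf{K}_\emptyset\alpha$; from $\phi$ infer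 $[x:=a]\phi$. Intensional distributed knowledge: for a formula $\phi$ with free variables among $\{x\}$ and $A\subseteq\mathbf{A}$, let $\phi!(A):=\bigwedge_{a\in A}\langle x:=a\rangle\phi\wedge\bigwedge_{b\in\mathbf{A}\setminus A}[x:=b]\neg\phi$. For a sentence $\alpha$, $\mathsf{K}_\phi\alpha:=\bigwedge_{\{\vec a\}\subseteq\mathbf{A}}(\phi!(\{\vec a\})\to[\vec{x}:=\vec{a}]\mathsf{K}_{\vec{x}}\alpha)$, where the conjunction ranges over all subsets of $\mathbf{A}$, each listed as a string $\vec a$ of distinct agents and paired with a string $\vec x$ of distinct variables of the same length. *)

From HB Require Import structures.
From mathcomp Require Import all_boot.
From mathcomp Require Import finmap.

Set Implicit Arguments.
Unset Strict Implicit.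
Unset Printing Implicit Defensive.

Local Open Scope fset_scope.

(* Variables are natural numbers (a countably infinite set disjoint from the
   agents); agents form a finite type A; predicate letters a countable type P. *)
Section LEL.
Variables (A : finType) (P : countType).

Inductive form : Type :=
  | fPred : P -> nat -> form
  | fTop  : form
  | fNeg  : form -> form
  | fAnd  : form -> form -> form
  | fAsg  : nat -> A -> form -> form
  | fK    : {fset nat} -> form -> form.

Fixpoint FV (f : form) : {fset nat} :=
  match f with
  | fPred _ x => [fset x]
  | fTop => fset0
  | fNeg g => FV g
  | fAnd g h => FV g `|` FV h
  | fAsg x _ g => FV g `\ x
  | fK X _ => X
  end.

Definition sentence (f : form) : bool := FV f == fset0.

Fixpoint wf (f : form) : bool :=
  match f with
  | fPred _ _ | fTop => true
  | fNeg g => wf g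
  | fAnd g h => wf g && wf h
  | fAsg _ _ g => wf g
  | fK _ a => sentence a && wf a
  end.

Definition fBot : form := fNeg fTop.
Definition fImp (f g : form) : form := fNeg (fAnd f (fNeg g)).
Definition fDia (x : nat) (a : A) (f : form) : form := fNeg (fAsg x a (fNeg f)).

Fixpoint bigAnd (s : seq form) : form :=
  match s with
  | [::] => fTop
  | [:: f] => f
  | f :: s' => fAnd f (bigAnd s')
  end.

Fixpoint asgs (xs : seq nat) (as_ : seq A) (f : form) : form :=
  match xs, as_ with
  | x :: xs', a :: as' => fAsg x a (asgs xs' as' f)
  | _, _ => f
  end.

Definition fset_of (xs : seq nat) : {fset nat} := [fset y | y in xs].

Fixpoint subst (y x : nat) (f : form) : form :=
  match f with
  | fPred p z => fPred p (if z == x then y else z)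
  | fTop => fTop
  | fNeg g => fNeg (subst y x g)
  | fAnd g h => fAnd (subst y x g) (subst y x h)
  | fAsg z a g => if z == x then fAsg z a g else fAsg z a (subst y x g)
  | fK X a => fK (if x \in X then y |` (X `\ x) else X) a
  end.

Fixpoint admissible (y x : nat) (f : form) : bool :=
  match f with
  | fPred _ _ | fTop | fK _ _ => true
  | fNeg g => admissible y x g
  | fAnd g h => admissible y x g && admissible y x h
  | fAsg z _ g =>
      if z == x then true
      else if z == y then x \notin FV g
      else admissible y x g
  end.

(* Propositional tautologies: true under every valuation of the
   non-boolean (atomic, assignment, knowledge) subformulas. *)
Fixpoint peval (v : form -> bool) (f : form) : bool :=
  match f with
  | fTop => true
  | fNeg g => ~~ peval v g
  | fAnd g h => peval v g && peval v h
  | _ => v f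
  end.

Definition tautology (f : form) : Prop := forall v, peval v f.

Definition allA : seq A := enum A.

Inductive axiom : form -> Prop :=
  | AxTaut f : tautology f -> axiom f
  | AxKdist X a b : axiom (fImp (fK X (fImp a b)) (fImp (fK X a) (fK X b)))
  | AxKmono X Y a : X `<=` Y -> axiom (fImp (fK X a) (fK Y a))
  | AxAdist x a f g :
      axiom (fImp (fAsg x a (fImp f g)) (fImp (fAsg x a f) (fAsg x a g)))
  | AxAfunc x a f : axiom (fImp (fDia x a f) (fAsg x a f))
  | AxAvac x a f : x \notin FV f -> axiom (fImp f (fAsg x a f))
  | AxAsubst x y a f : admissible y x f ->
      axiom (fAsg y a (fImp (fAsg x a f) (subst y x f)))
  | AxAcomm x y a b f : x != y ->
      axiom (fImp (fAsg x a (fAsg y b f)) (fAsg y b (fAsg x a f)))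
  | AxAall x f : axiom (fImp (bigAnd [seq fAsg x a f | a <- allA]) f)
  | AxKT X a : axiom (fImp (fK X a) a)
  | AxNegIntro (xs : seq nat) (as_ : seq A) a : size xs = size as_ ->
      axiom (asgs xs as_ (fImp (fNeg (fK (fset_of xs) a))
               (fK (fset_of xs) (asgs xs as_ (fNeg (fK (fset_of xs) a))))))
  | AxKdom x a : axiom (fAsg x a (fK [fset x] (fDia x a fTop)))
  | AxKpred x a p :
      axiom (fAsg x a (fImp (fPred p x) (fK [fset x] (fAsg x a (fPred p x)))))
  | AxKemp (xs : seq nat) (as_ : seq A) x : size xs = size as_ ->
      let B := [seq b <- allA | b \notin as_] in
      let E := bigAnd [seq fAsg x b fBot | b <- B] in
      axiom (asgs xs as_ (fImp E (fK (fset_of xs) E))).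

Inductive LEL : form -> Prop :=
  | LAx f : axiom f -> wf f -> LEL f
  | LMP f g : LEL (fImp f g) -> LEL f -> LEL g
  | LNecK a : sentence a -> LEL a -> LEL (fK fset0 a)
  | LNecA x a f : LEL f -> LEL (fAsg x a f).

Definition bang (x : nat) (phi : form) (B : {set A}) : form :=
  fAnd (bigAnd [seq fDia x a phi | a <- enum B])
       (bigAnd [seq fAsg x b (fNeg phi) | b <- enum (~: B)]).

(* Intensional distributed knowledge K_phi alpha, given for each subset B of
   agents a listing lst B of its elements and a string vars B of variables. *)
Definition Kint (lst : {set A} -> seq A) (vars : {set A} -> seq nat)
    (x : nat) (phi alpha : form) : form :=
  bigAnd [seq fImp (bang x phi B)
                   (asgs (vars B) (lst B) (fK (fset_of (vars B)) alpha))
         | B <- enum {set A}].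

Inductive chi_form (x : nat) : form -> Prop :=
  | ChiP p : chi_form x (fPred p x)
  | ChiK a : sentence a -> wf a -> chi_form x (fK [fset x] a)
  | ChiNeg f : chi_form x f -> chi_form x (fNeg f)
  | ChiAnd f g : chi_form x f -> chi_form x g -> chi_form x (fAnd f g).

End LEL.

From mathcomp Require Import all_boot finmap.

(** Write [D_t a] for the distributed knowledge [[t] K_(vars t) a] of the
    agents listed in the assignment sequence [t].  [K_chi beta] says that the
    group [B] of agents satisfying [chi] has [D_B beta].  Two facts make this
    introspective.  First, [D_t] is an S5-like modality: the negative
    introspection axiom together with [K_X a -> a] yields positive
    introspection, and [D_t] only grows with the group.  Second, formulas
    [chi] generated from [p_x] and [K_x a] by negation and conjunction are
    known to an agent whenever they hold of it, so [D_B] knows [<x := a> chi]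
    for each [a] in [B].  Hence for every [B'], either [B] is included in
    [B'] and [D_B beta] gives [D_B D_B' beta], or some [a] in [B] is missing
    from [B'] and [D_B] refutes [chi!(B')]; in both cases
    [D_B (chi!(B') -> D_B' beta)]. *)

Ltac taut := let v := fresh "v" in move=> v; rewrite ?/fImp ?/fDia ?/fBot /=;
  repeat match goal with
  | |- context [peval v ?f] => case: (peval v f)
  | |- context [v ?f] => case: (v f)
  end; done.

Section Derivations.
Local Set Implicit Arguments.
Local Unset Strict Implicit.
Local Open Scope fset_scope.
Variables (A : finType) (P : countType).
Local Notation form := (form A P).
Local Notation Top := (fTop A P).

Definition assign (t : seq (nat * A)) (f : form) : form :=
  foldr (fun p g => fAsg p.1 p.2 g) f t.

Definition distK (t : seq (nat * A)) (a : form) : form :=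
  assign t (fK (fset_of (unzip1 t)) a).

Definition introspective (t : seq (nat * A)) (f : form) : form :=
  assign t (fImp f (fK (fset_of (unzip1 t)) (assign t f))).

Lemma LEL_wf (f : form) : LEL f -> wf f.
Proof.
elim=> //= {f}.
  by move=> f g _ /andP[].
by move=> a -> _ ->.
Qed.

Lemma mem_fset_of (xs : seq nat) z : (z \in fset_of xs) = (z \in xs).
Proof. by apply/imfsetP/idP => [[w Hw ->] | H] //; exists z. Qed.

Lemma fset_of1 y : fset_of [:: y] = [fset y].
Proof. by apply/fsetP => z; rewrite mem_fset_of !inE. Qed.

Lemma wf_imp (f g : form) : wf (fImp f g) = wf f && wf g.
Proof. by []. Qed.

Lemma wf_assign t (f : form) : wf (assign t f) = wf f.
Proof. by elim: t => //= p t ->. Qed.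

Lemma FV_assign t (f : form) : FV (assign t f) = FV f `\` fset_of (unzip1 t).
Proof.
elim: t => [|[y a] t IH] /=; apply/fsetP=> z; first by rewrite in_fsetD mem_fset_of.
rewrite IH !in_fsetD in_fset1 !mem_fset_of /= inE.
by case: (z == y); rewrite ?andbF ?andbT //= andbC.
Qed.

Lemma sentence_imp (f g : form) : sentence (fImp f g) = sentence f && sentence g.
Proof. by rewrite /sentence /= fsetU_eq0. Qed.

Lemma sentence_and (f g : form) : sentence (fAnd f g) = sentence f && sentence g.
Proof. by rewrite /sentence /= fsetU_eq0. Qed.

Lemma sentence_assign t (f : form) :
  FV f `<=` fset_of (unzip1 t) -> sentence (assign t f).
Proof.
move=> Hf; rewrite /sentence FV_assign; apply/eqP/fsetP => z.
rewrite in_fsetD in_fset0; case Hz: (z \in FV f); last by rewrite andbF.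
by rewrite (fsubsetP Hf z Hz).
Qed.

Lemma sentence_assign_closed t (f : form) : sentence f -> sentence (assign t f).
Proof. by move/eqP=> Hf; apply: sentence_assign; rewrite Hf fsub0set. Qed.

Lemma sentence_distK t (a : form) : sentence (distK t a).
Proof. exact: sentence_assign. Qed.

Lemma wf_distK t (a : form) : wf (distK t a) = sentence a && wf a.
Proof. by rewrite wf_assign. Qed.

Lemma asgs_zip (xs : seq nat) (l : seq A) (f : form) :
  size xs = size l -> asgs xs l f = assign (zip xs l) f.
Proof. by elim: xs l => [|y xs IH] [|b l] //= [/IH ->]. Qed.

(* Keep [sentence] folded, so that the side-condition tactic below can
   rewrite with hypotheses about it. *)
Arguments sentence : simpl never.

Ltac wf_auto :=
  repeat match goal with H : context [wf (assign _ _)] |- _ => rewrite wf_assign in H end;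
  try (simpl in * );
  repeat match goal with H : is_true (_ && _) |- _ => case/andP: H => ? ? end;
  do 6 (simpl; repeat match goal with H : is_true _ |- _ => rewrite H end;
        rewrite ?wf_assign ?wf_distK ?sentence_distK ?sentence_imp ?sentence_and);
  rewrite /= ?andbT //.

Lemma LEL_taut (f : form) : tautology f -> wf f -> LEL f.
Proof. by move=> Tf Wf; apply: LAx => //; apply: AxTaut. Qed.

Lemma LEL_trans (f g h : form) :
  LEL (fImp f g) -> LEL (fImp g h) -> LEL (fImp f h).
Proof.
move=> Hfg Hgh; have /= /andP[Wf _] := LEL_wf Hfg; have /= /andP[Wg Wh] := LEL_wf Hgh.
by apply: LMP Hgh; apply: LMP Hfg; apply: LEL_taut; [taut | wf_auto].
Qed.

Lemma assign_nec t (f : form) : LEL f -> LEL (assign t f).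
Proof. by elim: t => //= p t IH /IH; apply: LNecA. Qed.

Lemma assign_K t (f g : form) : wf f -> wf g ->
  LEL (fImp (assign t (fImp f g)) (fImp (assign t f) (assign t g))).
Proof.
move=> Wf Wg; elim: t => [|[y a] t IH] /=; first by apply: LEL_taut; [taut | wf_auto].
have Hdist (g1 g2 : form) : wf g1 -> wf g2 ->
    LEL (fImp (fAsg y a (fImp g1 g2)) (fImp (fAsg y a g1) (fAsg y a g2))).
  by move=> ? ?; apply: LAx; [exact: AxAdist | wf_auto].
have W (h : form) : wf h -> wf (assign t h) by rewrite wf_assign.
apply: LEL_trans (LMP (Hdist _ _ _ _) (LNecA y a IH)) (Hdist _ _ (W _ Wf) (W _ Wg)).
  by apply: W; rewrite /= Wf Wg.
by rewrite /= !wf_assign Wf Wg.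
Qed.

Lemma assign_distr t (f g : form) :
  LEL (assign t (fImp f g)) -> LEL (fImp (assign t f) (assign t g)).
Proof.
move=> H; have := LEL_wf H; rewrite wf_assign /= => /andP[Wf Wg].
exact: LMP (assign_K t Wf Wg) H.
Qed.

Lemma assign_MP t (f g : form) :
  LEL (assign t (fImp f g)) -> LEL (assign t f) -> LEL (assign t g).
Proof. by move/assign_distr; apply: LMP. Qed.

Lemma assign_imp t (f g : form) : LEL (fImp f g) -> LEL (fImp (assign t f) (assign t g)).
Proof. by move/(assign_nec t); apply: assign_distr. Qed.

Lemma assign_taut1 t (f1 g : form) : tautology (fImp f1 g) -> wf g ->
  LEL (assign t f1) -> LEL (assign t g).
Proof.
move=> T Wg H1; have W1 := LEL_wf H1.
by apply: assign_MP H1; apply: assign_nec; apply: LEL_taut; last by wf_auto.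
Qed.

Lemma assign_taut2 t (f1 f2 g : form) : tautology (fImp f1 (fImp f2 g)) -> wf g ->
  LEL (assign t f1) -> LEL (assign t f2) -> LEL (assign t g).
Proof.
move=> T Wg H1 H2; have W1 := LEL_wf H1; have W2 := LEL_wf H2.
apply: assign_MP H2; apply: assign_MP H1.
by apply: assign_nec; apply: LEL_taut; last by wf_auto.
Qed.

Lemma assign_taut3 t (f1 f2 f3 g : form) :
  tautology (fImp f1 (fImp f2 (fImp f3 g))) -> wf g ->
  LEL (assign t f1) -> LEL (assign t f2) -> LEL (assign t f3) -> LEL (assign t g).
Proof.
move=> T Wg H1 H2 H3; have W1 := LEL_wf H1; have W2 := LEL_wf H2; have W3 := LEL_wf H3.
apply: assign_MP H3; apply: assign_MP H2; apply: assign_MP H1.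
by apply: assign_nec; apply: LEL_taut; last by wf_auto.
Qed.

Lemma assign_imp2 t (f1 f2 g : form) : LEL (fImp f1 (fImp f2 g)) ->
  LEL (fImp (assign t f1) (fImp (assign t f2) (assign t g))).
Proof.
move=> H; have /= /andP[W1 /andP[W2 Wg]] := LEL_wf H.
apply: (assign_taut2 (t := [::])) (assign_imp t H) (assign_K t W2 Wg); first by taut.
by wf_auto.
Qed.

Lemma K_nec X (f : form) : sentence f -> LEL f -> LEL (fK X f).
Proof.
move=> Sf H; have Wf := LEL_wf H.
by apply: LMP (LNecK Sf H); apply: LAx; [exact: (AxKmono _ (fsub0set X)) | wf_auto].
Qed.

Lemma K_imp X (f g : form) : sentence f -> sentence g -> LEL (fImp f g) ->
  LEL (fImp (fK X f) (fK X g)).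
Proof.
move=> Sf Sg H; have /= /andP[Wf Wg] := LEL_wf H.
apply: LMP (K_nec X _ H); last by rewrite sentence_imp Sf Sg.
by apply: LAx; [exact: AxKdist | wf_auto].
Qed.

Lemma K_imp2 X (f1 f2 g : form) : sentence f1 -> sentence f2 -> sentence g ->
  LEL (fImp f1 (fImp f2 g)) -> LEL (fImp (fK X f1) (fImp (fK X f2) (fK X g))).
Proof.
move=> S1 S2 Sg H; have /= /andP[W1 /andP[W2 Wg]] := LEL_wf H.
have S2g : sentence (fImp f2 g) by rewrite sentence_imp S2 Sg.
have H2 : LEL (fImp (fK X (fImp f2 g)) (fImp (fK X f2) (fK X g))).
  by apply: LAx; [exact: AxKdist | wf_auto].
by apply: (assign_taut2 (t := [::])) (K_imp X S1 S2g H) H2; [taut | wf_auto].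
Qed.

Lemma assign_comm t w a (f : form) : w \notin unzip1 t -> wf f ->
  LEL (fImp (assign t (fAsg w a f)) (fAsg w a (assign t f))).
Proof.
move=> + Wf; elim: t => [|[y b] t IH] /=; first by move=> _; apply: LEL_taut; [taut | wf_auto].
rewrite inE negb_or => /andP[Hwy /IH Hw].
apply: LEL_trans (assign_imp [:: (y, b)] Hw) _.
by apply: LAx; [apply: AxAcomm; rewrite eq_sym | wf_auto].
Qed.

Lemma assign_nec_in t w a (f : form) : uniq (unzip1 t) -> (w, a) \in t ->
  LEL (fAsg w a f) -> LEL (assign t f).
Proof.
elim: t => [|[y b] t IH] //= /andP[Hy Ut]; rewrite inE => /orP[/eqP [-> ->] | Hin] H.
  by have /= Wf := LEL_wf H; apply: LMP (assign_comm b Hy Wf) (assign_nec t H).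
by apply: LNecA; apply: IH.
Qed.

Lemma subst_id y (f : form) : subst y y f = f.
Proof.
elim: f => //=.
- by move=> p z; case: eqP => // ->.
- by move=> f ->.
- by move=> f -> g ->.
- by move=> z a f ->; case: eqP.
- by move=> X a; case: ifP => // Hy; rewrite fsetD1K.
Qed.

Lemma admissible_id y (f : form) : admissible y y f.
Proof.
elim: f => //=.
- by move=> f -> g ->.
- by move=> z a f ->; case: eqP.
Qed.

Lemma asg_idem_elim y a (f : form) : wf f -> LEL (fAsg y a (fImp (fAsg y a f) f)).
Proof.
move=> Wf; have := AxAsubst a (admissible_id y f); rewrite subst_id => Ax.
by apply: LAx => //; wf_auto.
Qed.

Lemma assign_sub_elim t r (f : form) : uniq (unzip1 t) -> {subset r <= t} -> wf f ->
  LEL (assign t (fImp (assign r f) f)).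
Proof.
move=> Ut; elim: r => [|[y a] r IH] Hsub Wf /=.
  by apply: assign_nec; apply: LEL_taut; [taut | wf_auto].
have H1 : LEL (assign t (fImp (fAsg y a (assign r f)) (assign r f))).
  apply: (assign_nec_in (w := y) (a := a)) => //; first by apply: Hsub; rewrite inE eqxx.
  by apply: asg_idem_elim; rewrite wf_assign.
have H2 := IH (fun p Hp => Hsub p (@mem_behead _ (_ :: _) p Hp)) Wf.
by apply: assign_taut2 H1 H2; [taut | wf_auto].
Qed.

Lemma assign_vacuous t (f : form) : sentence f -> wf f -> LEL (fImp f (assign t f)).
Proof.
move=> Sf Wf; elim: t => [|[z b] t IH] /=; first by apply: LEL_taut; [taut | wf_auto].
apply: LEL_trans IH _; apply: LAx; last by wf_auto.
by apply: AxAvac; move: (sentence_assign_closed t Sf); rewrite /sentence => /eqP ->.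
Qed.

Lemma subst_assign w y s (f : form) : y \notin unzip1 s ->
  subst w y (assign s f) = assign s (subst w y f).
Proof.
elim: s => [|[z b] s IH] //=; rewrite inE negb_or => /andP[Hyz /IH ->].
by rewrite eq_sym (negbTE Hyz).
Qed.

Lemma admissible_assign w y s (f : form) : y \notin unzip1 s -> w \notin unzip1 s ->
  admissible w y (assign s f) = admissible w y f.
Proof.
elim: s => [|[z b] s IH] //=; rewrite !inE !negb_or => /andP[Hyz Hy] /andP[Hwz Hw].
by rewrite eq_sym (negbTE Hyz) eq_sym (negbTE Hwz) IH.
Qed.

Lemma unzip1_zip_subset (ws : seq nat) (l : seq A) (t : seq (nat * A)) :
  size ws = size l -> {subset zip ws l <= t} -> {subset ws <= unzip1 t}.
Proof.
move=> Hsz Hsub w Hw; have /(_ w) := sub_map (f := fst) Hsub; apply.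
by rewrite -[map _ (zip _ _)]/(unzip1 _) unzip1_zip ?Hsz.
Qed.

(* Each variable [y] of [s] is traded for its counterpart [w] in [ws] by the
   substitution axiom [[w:=b]([y:=b] phi -> phi[w/y])], available because [t]
   assigns [b] to [w]. *)
Lemma assign_K_rename t s ws X (a : form) :
  uniq (unzip1 t) -> uniq (unzip1 s) -> size ws = size s ->
  {subset zip ws (unzip2 s) <= t} -> all [pred w | w \notin unzip1 s] ws ->
  sentence a -> wf a ->
  exists2 X', X' `<=` (X `\` fset_of (unzip1 s)) `|` fset_of ws &
    LEL (assign t (fImp (assign s (fK X a)) (fK X' a))).
Proof.
move=> Ut; elim: s ws X => [|[y b] s IH] [|w ws] X //=.
  move=> _ _ _ _ Sa Wa; exists X.
    by apply/fsubsetP => z Hz; rewrite in_fsetU in_fsetD Hz mem_fset_of.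
  by apply: assign_nec; apply: LEL_taut; [taut | wf_auto].
move=> /andP[Hy Us] [Hsz] Hsub /andP[Hw Hws] Sa Wa.
move: Hw; rewrite inE negb_or => /andP[Hwy Hw].
set X1 := if y \in X then w |` (X `\ y) else X.
have Hws1 : all [pred w | w \notin unzip1 s] ws.
  by apply: sub_all Hws => z /=; rewrite inE negb_or => /andP[].
have Hsub1 : {subset zip ws (unzip2 s) <= t}.
  by move=> p Hp; apply: Hsub; rewrite inE Hp orbT.
have [X' HX' H2] := IH ws X1 Us Hsz Hsub1 Hws1 Sa Wa.
exists X'.
  apply/fsubsetP => z /(fsubsetP HX'); rewrite !in_fsetU !in_fsetD !mem_fset_of /= !inE.
  rewrite /X1; case: ifP => HyX; rewrite ?inE.
    by case: (z == w); case: (z == y); case: (z \in unzip1 s); case: (z \in X).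
  case: eqP => [-> | _]; first by rewrite HyX andbF /= => ->; rewrite !orbT.
  by case: (z == w); case: (z \in unzip1 s); case: (z \in X).
have H1 : LEL (assign t (fImp (fAsg y b (assign s (fK X a))) (assign s (fK X1 a)))).
  apply: (assign_nec_in (w := w) (a := b)) => //; first by apply: Hsub; rewrite inE eqxx.
  have Ax := @AxAsubst A P y w b (assign s (fK X a)).
  rewrite admissible_assign // subst_assign // in Ax.
  by apply: LAx; [exact: Ax | wf_auto].
by apply: assign_taut2 H1 H2; [taut | wf_auto].
Qed.

Lemma assign_K_distK s t ws X (a : form) :
  uniq (unzip1 s) -> uniq (unzip1 t) -> size ws = size s ->
  {subset zip ws (unzip2 s) <= t} -> all [pred w | w \notin unzip1 s] ws ->
  X `<=` fset_of (unzip1 s) -> sentence a -> wf a ->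
  LEL (fImp (assign s (fK X a)) (distK t a)).
Proof.
move=> Us Ut Hsz Hsub Hws HX Sa Wa.
have [X' HX' HR] := assign_K_rename X Ut Us Hsz Hsub Hws Sa Wa.
have HX't : X' `<=` fset_of (unzip1 t).
  apply/fsubsetP => z /(fsubsetP HX'); rewrite in_fsetU in_fsetD !mem_fset_of.
  case/orP => [/andP[/negP Hzs /(fsubsetP HX)] | Hz]; first by rewrite mem_fset_of.
  by apply: unzip1_zip_subset Hsub _ Hz; rewrite size_map.
have HM : LEL (assign t (fImp (fK X' a) (fK (fset_of (unzip1 t)) a))).
  by apply: assign_nec; apply: LAx; [exact: AxKmono | wf_auto].
have Ss : sentence (assign s (fK X a)) by exact: sentence_assign.
apply: LEL_trans (assign_vacuous t Ss _) _; first by wf_auto.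
by apply: assign_distr; apply: assign_taut2 HR HM; [taut | wf_auto].
Qed.

Lemma fresh_vars (l : seq nat) n :
  exists z : seq nat, [/\ size z = n, uniq z & all [pred e | e \notin l] z].
Proof.
exists (iota (\max_(y <- l) y).+1 n); split; rewrite ?size_iota ?iota_uniq //.
apply/allP => e; rewrite mem_iota /= => /andP[He _]; apply/negP => Hel.
by have := leq_trans He (@leq_bigmax_seq _ _ xpredT (fun y => y) e Hel isT); rewrite ltnn.
Qed.

Lemma zip_subset_exists (t : seq (nat * A)) (l : seq A) : {subset l <= unzip2 t} ->
  exists2 ws : seq nat, size ws = size l & {subset zip ws l <= t}.
Proof.
elim: l => [|b l IH] Hl; first by exists [::].
have [ws Hsz Hsub] := IH (fun c Hc => Hl c (@mem_behead _ (_ :: _) c Hc)).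
have /mapP[[w b'] Hwt /= Eb] := Hl b (mem_head b l).
exists (w :: ws); first by rewrite /= Hsz.
by move=> p; rewrite /= inE => /orP[/eqP -> | /Hsub //]; rewrite Eb.
Qed.

(* Renaming the variables of [s] directly into those of [t] could clash with
   the variables of [s] still to be renamed; go through fresh variables. *)
Lemma distK_mono s t X (a : form) : uniq (unzip1 s) -> uniq (unzip1 t) ->
  X `<=` fset_of (unzip1 s) -> {subset unzip2 s <= unzip2 t} ->
  sentence a -> wf a -> LEL (fImp (assign s (fK X a)) (distK t a)).
Proof.
move=> Us Ut HX Hst Sa Wa.
have [z [Hz Uz Fz]] := fresh_vars (unzip1 s ++ unzip1 t) (size s).
have Hzs : size z = size (unzip2 s) by rewrite size_map.
set u := zip z (unzip2 s).
have U1 : unzip1 u = z by rewrite unzip1_zip ?Hzs.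
have U2 : unzip2 u = unzip2 s by rewrite unzip2_zip ?Hzs.
have [ws Hws Hwt] := zip_subset_exists Hst.
apply: LEL_trans (assign_K_distK (t := u) (ws := z) Us _ Hz _ _ HX Sa Wa) _.
- by rewrite U1.
- by [].
- by apply: sub_all Fz => e /=; rewrite mem_cat negb_or => /andP[].
apply: (assign_K_distK (ws := ws)) => //; rewrite ?U1 ?U2 ?size_zip ?Hzs ?minnn //.
apply/allP => w /(unzip1_zip_subset Hws Hwt) Hw; apply/negP => /(allP Fz).
by rewrite /= mem_cat Hw orbT.
Qed.

Lemma sentence_asg x a (f : form) : FV f `<=` [fset x] -> sentence (fAsg x a f).
Proof. by move=> Ff; apply: (sentence_assign (t := [:: (x, a)])); rewrite fset_of1. Qed.

Lemma distK_imp t (f g : form) : sentence f -> sentence g -> LEL (fImp f g) ->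
  LEL (fImp (distK t f) (distK t g)).
Proof. by move=> Sf Sg H; apply: assign_imp; apply: K_imp. Qed.

Lemma introspective_negK t (f : form) : sentence f -> wf f ->
  LEL (introspective t (fNeg (fK (fset_of (unzip1 t)) f))).
Proof.
move=> Sf Wf; have Hsz : size (unzip1 t) = size (unzip2 t) by rewrite !size_map.
have := AxNegIntro f Hsz; rewrite !asgs_zip // zip_unzip => Ax.
by apply: LAx => //; wf_auto; apply: sentence_assign.
Qed.

Lemma introspective_neg t (f : form) : uniq (unzip1 t) ->
  FV f `<=` fset_of (unzip1 t) -> LEL (introspective t f) ->
  LEL (introspective t (fNeg f)).
Proof.
move=> Ut Ff H; have := LEL_wf H; rewrite wf_assign /= => /andP[Wf _].
set Y := fset_of (unzip1 t).
have Sf : sentence (assign t f) := sentence_assign Ff.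
have Snf : sentence (assign t (fNeg f)) := sentence_assign (f := fNeg f) Ff.
have SnK : sentence (assign t (fNeg (fK Y (assign t f)))) by apply: sentence_assign.
have HT : LEL (assign t (fImp (fK Y (assign t f)) (assign t f))).
  by apply: assign_nec; apply: LAx; [exact: AxKT | wf_auto].
have Hsub := assign_sub_elim Ut (fun p (Hp : p \in t) => Hp) Wf.
have Hnot : LEL (assign t (fImp (fNeg f) (fNeg (fK Y (assign t f))))).
  by apply: assign_taut2 HT Hsub; [taut | wf_auto].
have H5 := introspective_negK t Sf (etrans (wf_assign t f) Wf).
have Hneg : LEL (fImp (assign t (fNeg (fK Y (assign t f)))) (assign t (fNeg f))).
  by apply: assign_distr; apply: assign_taut1 H; [taut | wf_auto].
have HK := assign_nec t (K_imp Y SnK Snf Hneg).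
by apply: assign_taut3 Hnot H5 HK; [taut | wf_auto].
Qed.

(* As in S5, positive introspection follows from negative introspection and
   [K_X a -> a]. *)
Lemma introspective_K t (f : form) : uniq (unzip1 t) -> sentence f -> wf f ->
  LEL (introspective t (fK (fset_of (unzip1 t)) f)).
Proof.
move=> Ut Sf Wf; set Kf := fK (fset_of (unzip1 t)) f.
have FKf : FV (fNeg Kf) `<=` fset_of (unzip1 t) by exact: fsubset_refl.
have H := introspective_neg Ut FKf (introspective_negK t Sf Wf).
rewrite /introspective in H *.
have Hnn : LEL (fImp (assign t (fNeg (fNeg Kf))) (assign t Kf)).
  by apply: assign_imp; apply: LEL_taut; [taut | wf_auto].
have SKf : sentence (assign t Kf) := sentence_assign (f := Kf) FKf.
have SnnKf : sentence (assign t (fNeg (fNeg Kf))) := sentence_assign (f := fNeg (fNeg Kf)) FKf.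
have HK := assign_nec t (K_imp (fset_of (unzip1 t)) SnnKf SKf Hnn).
by apply: assign_taut2 H HK; [taut | wf_auto].
Qed.

Lemma distK_4 t (f : form) : uniq (unzip1 t) -> sentence f -> wf f ->
  LEL (fImp (distK t f) (distK t (distK t f))).
Proof. by move=> Ut Sf Wf; apply: assign_distr; apply: introspective_K. Qed.

Lemma introspective_and t (f g : form) :
  FV f `<=` fset_of (unzip1 t) -> FV g `<=` fset_of (unzip1 t) ->
  LEL (introspective t f) -> LEL (introspective t g) ->
  LEL (introspective t (fAnd f g)).
Proof.
rewrite /introspective => Ff Fg Hf Hg.
have := LEL_wf Hf; have := LEL_wf Hg; rewrite !wf_assign /= => /andP[Wg _] /andP[Wf _].
have Ffg : FV (fAnd f g) `<=` fset_of (unzip1 t) by rewrite /= fsubUset Ff Fg.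
have H1 : LEL (fImp (assign t f) (fImp (assign t g) (assign t (fAnd f g)))).
  by apply: assign_imp2; apply: LEL_taut; [taut | wf_auto].
have Sfg : sentence (assign t (fAnd f g)) := sentence_assign Ffg.
have HK := assign_nec t
  (K_imp2 (fset_of (unzip1 t)) (sentence_assign Ff) (sentence_assign Fg) Sfg H1).
by apply: assign_taut3 Hf Hg HK; [taut | wf_auto].
Qed.

Lemma introspective_pred x a p : LEL (introspective [:: (x, a)] (fPred A p x)).
Proof.
have Sp : sentence (fAsg x a (fPred A p x)).
  by apply: (sentence_assign (t := [:: (x, a)])); rewrite fset_of1.
by rewrite /introspective /= fset_of1; apply: LAx; [exact: AxKpred | wf_auto].
Qed.

Lemma chi_form_FV x (f : form) : chi_form x f -> FV f `<=` [fset x].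
Proof.
by elim=> //= g h _ Hg _ Hh; rewrite fsubUset Hg Hh.
Qed.

Lemma chi_form_wf x (f : form) : chi_form x f -> wf f.
Proof. by elim=> //= [b -> -> | g h _ -> _ ->]. Qed.

Lemma introspective_chi x a (f : form) : chi_form x f ->
  LEL (introspective [:: (x, a)] f).
Proof.
have Y1 : fset_of (unzip1 [:: (x, a)]) = [fset x] := fset_of1 x.
elim=> [p | b Sb Wb | g Hg IH | g h Hg IHg Hh IHh].
- exact: introspective_pred.
- by have := introspective_K (t := [:: (x, a)]) isT Sb Wb; rewrite Y1.
- by apply: introspective_neg => //; rewrite Y1; apply: chi_form_FV.
- by apply: introspective_and => //; rewrite Y1; apply: chi_form_FV.
Qed.

Lemma asg_K_box_dia x a (f : form) : FV f `<=` [fset x] -> wf f ->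
  LEL (fImp (fAsg x a (fK [fset x] (fAsg x a f))) (fAsg x a (fK [fset x] (fDia x a f)))).
Proof.
move=> Ff Wf; set s := [:: (x, a)].
have Sbox : sentence (fAsg x a f) := sentence_asg a Ff.
have Sdia : sentence (fDia x a f) := sentence_asg a (f := fNeg f) Ff.
have Sexec : sentence (fDia x a Top) := sentence_assign_closed s (f := fNeg Top) (eqxx _).
have Kexec : LEL (fAsg x a (fK [fset x] (fDia x a Top))).
  by apply: LAx; [exact: AxKdom | wf_auto].
have Hbox : LEL (fImp (fAsg x a f) (fImp (fAsg x a (fNeg f)) (fAsg x a (@fBot A P)))).
  by apply: (assign_imp2 s); apply: LEL_taut; [taut | wf_auto].
have Hdia : LEL (fImp (fAsg x a f) (fImp (fDia x a Top) (fDia x a f))).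
  by apply: (assign_taut1 (t := [::])) Hbox; [taut | wf_auto].
have HK := assign_nec s (K_imp2 [fset x] Sbox Sexec Sdia Hdia).
by apply: (assign_distr (t := s)); apply: (assign_taut2 (t := s)) Kexec HK; [taut | wf_auto].
Qed.

Lemma dia_distK x a t (f : form) : FV f `<=` [fset x] ->
  LEL (introspective [:: (x, a)] f) -> uniq (unzip1 t) -> a \in unzip2 t ->
  LEL (fImp (fDia x a f) (distK t (fDia x a f))).
Proof.
move=> Ff Hf Ut Ha; have := LEL_wf Hf; rewrite /= => /andP[Wf _].
have Hfunc : LEL (fImp (fDia x a f) (fAsg x a f)) by apply: LAx; [exact: AxAfunc | wf_auto].
have Hintro : LEL (fImp (fAsg x a f) (fAsg x a (fK [fset x] (fAsg x a f)))).
  by rewrite -(fset_of1 x); exact: assign_distr Hf.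
have Hmono : LEL (fImp (fAsg x a (fK [fset x] (fDia x a f))) (distK t (fDia x a f))).
  apply: (distK_mono (s := [:: (x, a)])) => //; last exact: (sentence_asg a (f := fNeg f) Ff).
    by rewrite fset_of1.
  by move=> b; rewrite inE => /eqP ->.
exact: LEL_trans Hfunc (LEL_trans Hintro (LEL_trans (asg_K_box_dia a Ff Wf) Hmono)).
Qed.

Lemma peval_bigAnd v (L : seq form) : peval v (bigAnd L) = all (peval v) L.
Proof. by elim: L => [|f [|g L] IH] //=; rewrite ?andbT // IH. Qed.

Lemma wf_bigAnd (L : seq form) : wf (bigAnd L) = all (@wf A P) L.
Proof. by elim: L => [|f [|g L] IH] //=; rewrite ?andbT // IH. Qed.

Lemma sentence_bigAnd_map (T : Type) (F : T -> form) (s : seq T) :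
  (forall b, sentence (F b)) -> sentence (bigAnd (map F s)).
Proof.
move=> SF; elim: s => [|b [|c s] IH]; [exact: eqxx | exact: SF |].
by rewrite -[bigAnd _]/(fAnd (F b) (bigAnd (map F (c :: s)))) sentence_and SF.
Qed.

Lemma wf_bigAnd_map (T : Type) (F : T -> form) (s : seq T) :
  (forall b, wf (F b)) -> wf (bigAnd (map F s)).
Proof. by move=> WF; rewrite wf_bigAnd; elim: s => //= b s ->; rewrite WF. Qed.

Lemma bigAnd_elim (T : eqType) (F : T -> form) (s : seq T) b :
  b \in s -> wf (bigAnd (map F s)) -> LEL (fImp (bigAnd (map F s)) (F b)).
Proof.
move=> Hb W; have := W; rewrite wf_bigAnd all_map => /allP /(_ b Hb) /= Wb.
apply: LEL_taut; last by rewrite /= W Wb.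
move=> v; rewrite /= peval_bigAnd all_map; case E: all => //=.
by have /= -> := allP E b Hb.
Qed.

Lemma bigAnd_intro (T : Type) (H : form) (F : T -> form) (s : seq T) : wf H ->
  (forall b, LEL (fImp H (F b))) -> LEL (fImp H (bigAnd (map F s))).
Proof.
move=> WH HF; elim: s => [|b [|c s] IH] /=.
- by apply: LEL_taut; [taut | wf_auto].
- exact: HF.
- have := LEL_wf (HF b); have := LEL_wf IH => /= W1 W2.
  by apply: (assign_taut2 (t := [::])) (HF b) IH; [taut | wf_auto].
Qed.

Lemma distK_bigAnd (T : Type) t (H : form) (F : T -> form) (s : seq T) : wf H ->
  (forall b, sentence (F b)) -> (forall b, LEL (fImp H (distK t (F b)))) ->
  LEL (fImp H (distK t (bigAnd (map F s)))).
Proof.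
move=> WH SF HF; elim: s => [|b [|c s] IH].
- have DT : LEL (distK t Top).
    by apply: assign_nec; apply: K_nec; [exact: eqxx | apply: LEL_taut; [taut | wf_auto]].
  have := LEL_wf DT => WT.
  by apply: (assign_taut1 (t := [::])) DT; [taut | wf_auto].
- exact: HF.
- set G := bigAnd (map F (c :: s)) in IH *.
  change (LEL (fImp H (distK t (fAnd (F b) G)))).
  have SG : sentence G by apply: sentence_bigAnd_map.
  have Sb := SF b; have := LEL_wf (HF b); have := LEL_wf IH.
  rewrite /= !wf_distK => /andP[_ /andP[_ WG]] /andP[_ /andP[_ Wb]].
  have HK : LEL (fImp (distK t (F b)) (fImp (distK t G) (distK t (fAnd (F b) G)))).
    apply: assign_imp2; apply: K_imp2 => //; first by rewrite sentence_and Sb SG.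
    by apply: LEL_taut; [taut | wf_auto].
  by apply: (assign_taut3 (t := [::])) (HF b) IH HK; [taut | wf_auto].
Qed.

Section IntensionalKnowledge.
Variables (lst : {set A} -> seq A) (vars : {set A} -> seq nat).
Hypothesis Hlst : forall B : {set A}, uniq (lst B) /\ [set a in lst B] = B.
Hypothesis Hvars : forall B : {set A}, uniq (vars B) /\ size (vars B) = size (lst B).
Variables (x : nat) (chi : form).
Hypothesis Hchi : chi_form x chi.

Let group (B : {set A}) := zip (vars B) (lst B).

Lemma Kint_distK (a : form) : Kint lst vars x chi a =
  bigAnd [seq fImp (bang x chi B) (distK (group B) a) | B <- enum {set A}].
Proof.
rewrite /Kint; congr bigAnd; apply: eq_map => B.
by rewrite asgs_zip ?(Hvars B).2 // /distK /group unzip1_zip // (Hvars B).2.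
Qed.

Lemma uniq_group B : uniq (unzip1 (group B)).
Proof. by rewrite /group unzip1_zip ?(Hvars B).2 //; exact: (Hvars B).1. Qed.

Lemma mem_group B a : (a \in unzip2 (group B)) = (a \in B).
Proof. by rewrite /group unzip2_zip ?(Hvars B).2 // -{2}(Hlst B).2 inE. Qed.

Lemma sentence_bang B : sentence (bang x chi B).
Proof.
have Fchi := chi_form_FV Hchi.
by rewrite /bang sentence_and; apply/andP; split; apply: sentence_bigAnd_map => a;
  apply: sentence_asg.
Qed.

Lemma wf_bang B : wf (bang x chi B).
Proof.
by apply/andP; split; apply: wf_bigAnd_map => a; exact: chi_form_wf Hchi.
Qed.

Lemma sentence_Kint (a : form) : sentence (Kint lst vars x chi a).
Proof.
rewrite Kint_distK; apply: sentence_bigAnd_map => B.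
by rewrite sentence_imp sentence_bang sentence_distK.
Qed.

Lemma wf_Kint (a : form) : sentence a -> wf a -> wf (Kint lst vars x chi a).
Proof.
move=> Sa Wa; rewrite Kint_distK; apply: wf_bigAnd_map => B.
by rewrite wf_imp wf_bang wf_distK Sa Wa.
Qed.

Lemma bang_dia (B : {set A}) a : a \in B -> LEL (fImp (bang x chi B) (fDia x a chi)).
Proof.
move=> HaB; have Wchi := chi_form_wf Hchi.
have := wf_bang B; rewrite /bang /= => /andP[W1 W2].
have Ha : a \in enum B by rewrite mem_enum.
have Hel := bigAnd_elim (F := fun b => fDia x b chi) Ha W1.
by rewrite /bang; apply: (assign_taut1 (t := [::])) Hel; [taut | wf_auto].
Qed.

Lemma bang_box (B : {set A}) a : a \notin B -> LEL (fImp (bang x chi B) (fAsg x a (fNeg chi))).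
Proof.
move=> HaB; have Wchi := chi_form_wf Hchi.
have := wf_bang B; rewrite /bang /= => /andP[W1 W2].
have Ha : a \in enum (~: B) by rewrite mem_enum inE.
have Hel := bigAnd_elim (F := fun b => fAsg x b (fNeg chi)) Ha W2.
by rewrite /bang; apply: (assign_taut1 (t := [::])) Hel; [taut | wf_auto].
Qed.

(* Otherwise the rewriting in [wf_auto] unfolds [bang]. *)
Local Opaque bang.

Lemma distK_bang_imp_subset (B B' : {set A}) (b : form) : B \subset B' -> sentence b -> wf b ->
  LEL (fImp (distK (group B) b)
            (distK (group B) (fImp (bang x chi B') (distK (group B') b)))).
Proof.
move=> HBB' Sb Wb; have WB' := wf_bang B'; have SB' := sentence_bang B'.
have Hmono : LEL (fImp (distK (group B) b) (distK (group B') b)).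
  apply: distK_mono; rewrite ?uniq_group // => a.
  by rewrite !mem_group; exact: (subsetP HBB').
have Himp : LEL (fImp (distK (group B) b) (fImp (bang x chi B') (distK (group B') b))).
  by apply: (assign_taut1 (t := [::])) Hmono; [taut | wf_auto].
have Sc : sentence (fImp (bang x chi B') (distK (group B') b)).
  by rewrite sentence_imp SB' sentence_distK.
have H4 := distK_4 (uniq_group B) Sb Wb.
have HD := distK_imp (group B) (sentence_distK _ _) Sc Himp.
by apply: (assign_taut2 (t := [::])) H4 HD; [taut | wf_auto].
Qed.

Lemma bang_distK_not_bang (B B' : {set A}) a : a \in B -> a \notin B' ->
  LEL (fImp (bang x chi B) (distK (group B) (fNeg (bang x chi B')))).
Proof.
move=> HaB HaB'; have WB := wf_bang B; have WB' := wf_bang B'.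
have SnB' : sentence (fNeg (bang x chi B')) := sentence_bang B'.
have Fchi := chi_form_FV Hchi; have Wchi := chi_form_wf Hchi.
have Sdia : sentence (fDia x a chi) by apply: sentence_asg.
have Hdia := dia_distK Fchi (introspective_chi a Hchi) (uniq_group B)
                       (etrans (mem_group B a) HaB).
have Hnot : LEL (fImp (fDia x a chi) (fNeg (bang x chi B'))).
  by apply: (assign_taut1 (t := [::])) (bang_box HaB'); [taut | wf_auto].
have HD := distK_imp (group B) Sdia SnB' Hnot.
by apply: (assign_taut2 (t := [::])) (bang_dia HaB) (LEL_trans Hdia HD); [taut | wf_auto].
Qed.

Lemma distK_Kint_conjunct B B' (b : form) : sentence b -> wf b ->
  LEL (fImp (fAnd (bang x chi B) (distK (group B) b))
            (distK (group B) (fImp (bang x chi B') (distK (group B') b)))).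
Proof.
move=> Sb Wb; have WB := wf_bang B; have WB' := wf_bang B'; have SB' := sentence_bang B'.
have Sc : sentence (fImp (bang x chi B') (distK (group B') b)).
  by rewrite sentence_imp SB' sentence_distK.
have [HBB' | /subsetPn[a HaB HaB']] := boolP (B \subset B').
  have := distK_bang_imp_subset HBB' Sb Wb.
  by apply: (assign_taut1 (t := [::])); [taut | wf_auto].
have SnB' : sentence (fNeg (bang x chi B')) := SB'.
have Hex : LEL (fImp (fNeg (bang x chi B')) (fImp (bang x chi B') (distK (group B') b))).
  by apply: LEL_taut; [taut | wf_auto].
have HD := distK_imp (group B) SnB' Sc Hex.
have := bang_distK_not_bang HaB HaB'.
by apply: (assign_taut2 (t := [::])) HD; [taut | wf_auto].
Qed.

Lemma bang_distK_Kint B (b : form) : sentence b -> wf b ->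
  LEL (fImp (fAnd (bang x chi B) (distK (group B) b))
            (distK (group B) (Kint lst vars x chi b))).
Proof.
move=> Sb Wb; rewrite [Kint _ _ _ _ _]Kint_distK.
apply: distK_bigAnd => [|B'|B']; last exact: distK_Kint_conjunct.
- by rewrite /= wf_bang wf_distK Sb Wb.
- by rewrite sentence_imp sentence_bang sentence_distK.
Qed.

Lemma Kint_elim B (b : form) : sentence b -> wf b ->
  LEL (fImp (Kint lst vars x chi b) (fImp (bang x chi B) (distK (group B) b))).
Proof.
move=> Sb Wb; have := wf_Kint Sb Wb; rewrite Kint_distK => W.
by apply: bigAnd_elim W; rewrite mem_enum.
Qed.

Lemma Kint_bang_distK_Kint B (b : form) : sentence b -> wf b ->
  LEL (fImp (Kint lst vars x chi b)
            (fImp (bang x chi B) (distK (group B) (Kint lst vars x chi b)))).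
Proof.
move=> Sb Wb; have WK := wf_Kint Sb Wb; have SK := sentence_Kint b; have WB := wf_bang B.
have := bang_distK_Kint B Sb Wb.
by apply: (assign_taut2 (t := [::])) (Kint_elim B Sb Wb); [taut | wf_auto].
Qed.

End IntensionalKnowledge.

End Derivations.

Theorem proposition7 (A : finType) (P : countType) (a0 : A)
    (lst : {set A} -> seq A) (vars : {set A} -> seq nat)
    (Hlst : forall B : {set A}, uniq (lst B) /\ [set a in lst B] = B)
    (Hvars : forall B : {set A}, uniq (vars B) /\ size (vars B) = size (lst B))
    (x : nat) (chi beta : form A P) :
  chi_form x chi -> sentence beta -> wf beta ->
  LEL (fImp (Kint lst vars x chi beta)
            (Kint lst vars x chi (Kint lst vars x chi beta))).
Proof.
move=> Hchi Sb Wb.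
rewrite [X in fImp _ X](Kint_distK Hvars).
apply: bigAnd_intro => [|B]; first exact: wf_Kint.
exact: Kint_bang_distK_Kint.
Qed.
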